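(* For every $\epsilon>0$ and $R>0$ there exists an integer $N=N(\epsilon,R)$ such that for every $\theta\in[0,1)$ and every integer $n\geq N$, the set $\varphi_\theta(\mathbb N)$ is $\epsilon$-close in the open disc of radius $R$ centered at $\varphi_\theta(n)$ to some affine lattice which is equivalent, up to an orientation-preserving affine similarity of $\mathbb C$, to the lattice $\mathbb Z+\mathbb Z\,\frac{4i\pi n}{1+4i\pi\{\theta\} n}$.
   Context: For $\theta\in\mathbb R$, the phyllotactic map $\varphi_\theta:\mathbb N\to\mathbb C$ is $\varphi_\theta(n)=\sqrt{n}\,e^{2i\pi\theta n}$, and $\varphi_\theta(\mathbb N)$ is its image. $\{\theta\}=\theta-\lfloor\theta\rfloor\in[0,1)$ is the fractional part. An affine lattice is a set $\alpha+\Gamma$ with $\alpha\in\mathbb C$ and $\Gamma=\mathbb Z\omega_1+\mathbb Z\omega_2$ for $\mathbb R$-linearly independent $\omega_1,\omega_2\in\mathbb C$; two affine lattices are equivalent if one is the image of the other under a map $z\mapsto \lambda z+\beta$ with $\lambda\in\mathbb C^*$, $\beta\in\mathbb C$. For a metric space $E$, $x\in E$, $\epsilon,R>0$, two discrete subsets $A,B\subset E$ are $\epsilon$-close in the open ball of radius $R$ centered at $x$ if there exist subsets $A'\subset A$, $B'\subset B$ containing all points of $A$, respectively $B$, at distance at most $R$ from $x$, and a bijection $\psi:A'\to B'$ with $\mathrm{dist}(a,\psi(a))<\epsilon$ for all $a\in A'$. Here $E=\mathbb C$ with the Euclidean metric. *)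

From Stdlib Require Import Reals ZArith.
From Coquelicot Require Import Coquelicot.
Open Scope R_scope.

Definition phi (theta : R) (n : nat) : C :=
  Cmult (RtoC (sqrt (INR n)))
        (cos (2 * PI * theta * INR n), sin (2 * PI * theta * INR n)).

Definition phi_image (theta : R) : C -> Prop :=
  fun z => exists n : nat, z = phi theta n.

Definition R_indep (w1 w2 : C) : Prop :=
  forall r s : R, Cplus (Cmult (RtoC r) w1) (Cmult (RtoC s) w2) = RtoC 0 ->
                  r = 0 /\ s = 0.

Definition lattice_set (alpha w1 w2 : C) : C -> Prop :=
  fun z => exists a b : Z,
    z = Cplus alpha (Cplus (Cmult (RtoC (IZR a)) w1) (Cmult (RtoC (IZR b)) w2)).

Definition affine_lattice (L : C -> Prop) : Prop :=
  exists alpha w1 w2 : C, R_indep w1 w2 /\ forall z, L z <-> lattice_set alpha w1 w2 z.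

Definition image_by_similarity (L1 L2 : C -> Prop) : Prop :=
  exists lambda beta : C, lambda <> RtoC 0 /\
    forall z, L2 z <-> exists w, L1 w /\ z = Cplus (Cmult lambda w) beta.

Definition lattice_equiv (L1 L2 : C -> Prop) : Prop :=
  image_by_similarity L1 L2 \/ image_by_similarity L2 L1.

Definition eps_close_in_ball (eps Rad : R) (x : C) (A B : C -> Prop) : Prop :=
  exists A' B' : C -> Prop,
    (forall a, A' a -> A a) /\ (forall b, B' b -> B b) /\
    (forall a, A a -> Cmod (Cminus a x) <= Rad -> A' a) /\
    (forall b, B b -> Cmod (Cminus b x) <= Rad -> B' b) /\
    exists psi : C -> C,
      (forall a, A' a -> B' (psi a)) /\
      (forall a1 a2, A' a1 -> A' a2 -> psi a1 = psi a2 -> a1 = a2) /\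
      (forall b, B' b -> exists a, A' a /\ psi a = b) /\
      (forall a, A' a -> Cmod (Cminus a (psi a)) < eps).

Definition tau (theta : R) (n : nat) : C :=
  Cdiv (0, 4 * PI * INR n) (Cplus (RtoC 1) (0, 4 * PI * frac_part theta * INR n)).

From Stdlib Require Import Reals ZArith Lra Lia Psatz.
From Coquelicot Require Import Coquelicot.
Open Scope R_scope.

(* Put s = sqrt n and u = e^(2 i PI theta n), so that phi theta n = s u.  For j = n + k
   and any integer m, phi theta j = sqrt (s^2 + k) u e^(i d) with d = 2 PI (theta k - m).
   Choosing m nearest to theta k and expanding to first order in k / s and in d gives
   phi theta j = phi theta n + k w1 - m w2 + O(R^2 / s) whenever phi theta j lies within R
   of phi theta n, where w1 = u (1/(2s) + 2 i PI theta s) and w2 = 2 i PI s u.  Conversely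
   a point phi theta n + k w1 - m w2 within R of phi theta n has |k| <= n and
   |theta k - m| < 1/2, so it comes from j = n + k.  Hence j |-> k w1 - m w2 matches the
   two sets near phi theta n, and w2 / w1 = tau theta n. *)

Lemma sin_taylor_bounds a : 0 <= a <= 1 -> a - a^3/6 <= sin a <= a.
Proof.
  intros [h0 h1]. pose proof PI2_1.
  destruct (sin_bound a 0 h0 ltac:(lra)) as [lo hi].
  replace (sin_approx a (2*0+1)) with (a - a^3/6) in lo
    by (unfold sin_approx, sin_term; simpl; field).
  replace (sin_approx a (2*(0+1))) with (a - a^3/6 + a^5/120) in hi
    by (unfold sin_approx, sin_term; simpl; field).
  assert (0 <= a^3) by (apply pow_le; lra).
  assert (a*a <= 1) by nra.
  assert (a^5 <= a^3) by (replace (a^5) with (a^3 * (a*a)) by ring; nra).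
  lra.
Qed.

Lemma cos_taylor_bounds d : Rabs d <= PI/2 -> 1 - d^2/2 <= cos d <= 1 - d^2/2 + d^4/24.
Proof.
  intros h. apply Rabs_le_between in h.
  destruct (cos_bound d 0 ltac:(lra) ltac:(lra)) as [lo hi].
  replace (cos_approx d (2*0+1)) with (1 - d^2/2) in lo
    by (unfold cos_approx, cos_term; simpl; field).
  replace (cos_approx d (2*(0+1))) with (1 - d^2/2 + d^4/24) in hi
    by (unfold cos_approx, cos_term; simpl; field).
  lra.
Qed.

Lemma sin_sub_id_bound d : Rabs d <= 1 -> Rabs (sin d - d) <= Rabs d ^ 3 / 6.
Proof.
  intros h. destruct (Rle_or_lt 0 d) as [hd|hd].
  - rewrite (Rabs_right d) in * by lra. destruct (sin_taylor_bounds d (conj hd h)).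
    rewrite Rabs_left1; lra.
  - rewrite (Rabs_left d) in * by lra. destruct (sin_taylor_bounds (-d)); [lra|].
    rewrite sin_neg in *. rewrite Rabs_right; lra.
Qed.

Lemma one_sub_cos_upper d : Rabs d <= 1 -> 0 <= 1 - cos d <= d^2/2.
Proof.
  intros h. pose proof PI2_1. destruct (cos_taylor_bounds d ltac:(lra)).
  pose proof (COS_bound d). lra.
Qed.

Lemma one_sub_cos_lower d : Rabs d <= PI/2 -> d^2/3 <= 1 - cos d.
Proof.
  intros h. pose proof PI_4. destruct (cos_taylor_bounds d h).
  assert (d^2 <= 4).
  { rewrite <- (pow2_abs d). pose proof (Rabs_pos d). nra. }
  nra.
Qed.

Lemma Rabs_le_of_sqr_le x S : 0 <= S -> x^2 <= S^2 -> Rabs x <= S.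
Proof. intros hS h. rewrite <- (pow2_abs x) in h. pose proof (Rabs_pos x). nra. Qed.

Lemma Rabs_sub_le_of_sqr_sub_le t s K :
  0 < s -> 0 <= t -> Rabs (t * t - s * s) <= K * s -> Rabs (t - s) <= K.
Proof.
  intros hs ht h. replace (t * t - s * s) with ((t - s) * (t + s)) in h by ring.
  rewrite Rabs_mult, (Rabs_right (t + s)) in h by lra.
  pose proof (Rabs_pos (t - s)). apply Rmult_le_reg_r with s; nra.
Qed.

Lemma linearization_radial_error t s d K :
  0 < s -> 0 <= t -> Rabs (t - s) <= K -> Rabs d * s <= K -> Rabs d <= 1 ->
  Rabs (t * cos d - s - (t * t - s * s) / (2 * s)) * s <= 3/2 * K^2.
Proof.
  intros hs ht htK hdK hd1.
  destruct (one_sub_cos_upper d hd1) as [c0 c1]. rewrite <- (pow2_abs d) in c1.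
  apply Rabs_le_between in htK as htK'.
  pose proof (Rabs_pos d). pose proof (Rabs_pos (t - s)).
  replace (t * cos d - s - (t * t - s * s) / (2 * s))
    with (- (t * (1 - cos d) + (t - s)^2 / (2 * s))) by (field; lra).
  rewrite Rabs_Ropp, Rabs_right.
  2:{ apply Rle_ge, Rplus_le_le_0_compat; [nra|].
      apply Rmult_le_pos; [apply pow2_ge_0|]. apply Rlt_le, Rinv_0_lt_compat; lra. }
  replace ((t * (1 - cos d) + (t - s)^2 / (2 * s)) * s)
    with (t * s * (1 - cos d) + (t - s)^2 / 2) by (field; lra).
  assert (hcos : t * s * (1 - cos d) <= (s + K) * s * (Rabs d ^ 2 / 2))
    by (apply Rmult_le_compat; nra).
  rewrite <- (pow2_abs (t - s)).
  set (x := Rabs d * s) in *.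
  replace ((s + K) * s * (Rabs d ^ 2 / 2)) with ((x^2 + K * Rabs d * x) / 2) in hcos
    by (unfold x; field).
  assert (0 <= x) by (unfold x; nra).
  assert (x^2 <= K^2) by (apply pow_incr; lra).
  assert (Rabs (t - s) ^ 2 <= K^2) by (apply pow_incr; lra).
  assert (K * Rabs d * x <= K^2) by (assert (Rabs d * x <= K) by nra; nra).
  lra.
Qed.

Lemma linearization_angular_error t s d K :
  0 < s -> 0 <= t -> Rabs (t - s) <= K -> Rabs d * s <= K -> Rabs d <= 1 ->
  Rabs (t * sin d - s * d) * s <= 4/3 * K^2.
Proof.
  intros hs ht htK hdK hd1.
  pose proof (sin_sub_id_bound d hd1) as hsin.
  apply Rabs_le_between in htK as htK'.
  pose proof (Rabs_pos d). pose proof (Rabs_pos (t - s)).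
  replace (t * sin d - s * d) with (t * (sin d - d) + (t - s) * d) by ring.
  apply Rle_trans with ((s + K) * s * (Rabs d ^ 3 / 6) + K * (Rabs d * s)).
  { rewrite Rmult_comm. eapply Rle_trans; [apply Rmult_le_compat_l; [lra|apply Rabs_triang]|].
    rewrite !Rabs_mult, (Rabs_right t) by lra.
    assert (0 <= Rabs d ^ 3) by (apply pow_le; lra).
    assert (t * Rabs (sin d - d) <= (s + K) * (Rabs d ^ 3 / 6))
      by (pose proof (Rabs_pos (sin d - d)); apply Rmult_le_compat; lra).
    assert (Rabs (t - s) * Rabs d <= K * Rabs d) by (apply Rmult_le_compat_r; lra).
    nra. }
  set (x := Rabs d * s) in *.
  replace ((s + K) * s * (Rabs d ^ 3 / 6)) with ((x^2 * Rabs d + K * Rabs d ^ 2 * x) / 6)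
    by (unfold x; field).
  assert (0 <= x) by (unfold x; nra).
  assert (x^2 <= K^2) by (apply pow_incr; lra).
  assert (Rabs d ^ 2 <= 1) by nra.
  assert (x^2 * Rabs d <= K^2) by nra.
  assert (K * Rabs d ^ 2 * x <= K^2) by (assert (Rabs d ^ 2 * x <= K) by nra; nra).
  assert (K * x <= K^2) by nra.
  lra.
Qed.

Lemma polar_linearization_error t s d K :
  0 < s -> 0 <= t -> Rabs (t - s) <= K -> Rabs d * s <= K -> Rabs d <= 1 ->
  Rabs (t * cos d - s - (t * t - s * s) / (2 * s)) + Rabs (t * sin d - s * d) <= 3 * K^2 / s.
Proof.
  intros hs ht htK hdK hd1.
  pose proof (linearization_radial_error t s d K hs ht htK hdK hd1).
  pose proof (linearization_angular_error t s d K hs ht htK hdK hd1).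
  pose proof (pow2_ge_0 K).
  apply Rmult_le_reg_r with s; [lra|]. rewrite Rmult_plus_distr_r.
  replace (3 * K^2 / s * s) with (3 * K^2) by (field; lra). lra.
Qed.

Lemma polar_close_bounds t s d S :
  0 < S -> 2 * S <= s -> 0 <= t -> Rabs d <= PI ->
  (t * cos d - s)^2 + (t * sin d)^2 <= S^2 -> Rabs (t - s) <= S /\ Rabs d * s <= 2 * S.
Proof.
  intros hS hsS ht hdPI h.
  assert (e : (t * cos d - s)^2 + (t * sin d)^2 = (t - s)^2 + 2 * t * s * (1 - cos d)).
  { replace ((t * cos d - s)^2 + (t * sin d)^2)
      with (t^2 * ((sin d)² + (cos d)²) - 2 * t * s * cos d + s^2) by (unfold Rsqr; ring).
    rewrite sin2_cos2. ring. }
  rewrite e in h.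
  pose proof (COS_bound d).
  assert (hts : Rabs (t - s) <= S).
  { apply Rabs_le_of_sqr_le; [lra|].
    assert (0 <= 2 * t * s * (1 - cos d)) by (apply Rmult_le_pos; [apply Rmult_le_pos|]; lra).
    lra. }
  split; [exact hts|]. apply Rabs_le_between in hts.
  assert (hcos : s * s * (1 - cos d) <= S^2).
  { assert (s * s <= 2 * t * s) by nra.
    assert (s * s * (1 - cos d) <= 2 * t * s * (1 - cos d)) by (apply Rmult_le_compat_r; lra).
    pose proof (pow2_ge_0 (t - s)). lra. }
  destruct (Rle_or_lt (Rabs d) (PI/2)) as [hd|hd].
  - pose proof (one_sub_cos_lower d hd).
    replace (Rabs d * s) with (Rabs (d * s)) by (rewrite Rabs_mult, (Rabs_right s) by lra; ring).
    apply Rabs_le_of_sqr_le; [lra|]. nra.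
  - exfalso. assert (cos d <= 0).
    { destruct (Rle_or_lt 0 d).
      - rewrite Rabs_right in hd, hdPI by lra. apply cos_le_0; lra.
      - rewrite Rabs_left in hd, hdPI by lra. rewrite <- cos_neg. apply cos_le_0; lra. }
    nra.
Qed.

Lemma frac_part_id r : 0 <= r < 1 -> frac_part r = r.
Proof.
  intros h. unfold frac_part. rewrite <- (Int_part_spec r 0) by (simpl; lra). simpl. ring.
Qed.

Definition nearest_int (r : R) : Z := Int_part (r + /2).

Lemma nearest_int_bound r : Rabs (r - IZR (nearest_int r)) <= /2.
Proof. unfold nearest_int. destruct (base_Int_part (r + /2)). apply Rabs_le. lra. Qed.

Lemma nearest_int_eq r q : Rabs (r - IZR q) < /2 -> nearest_int r = q.
Proof.
  intros h. apply Rabs_lt_between in h. symmetry. apply Int_part_spec. lra.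
Qed.

Definition cis (a : R) : C := (cos a, sin a).

Lemma Cmod_cis a : Cmod (cis a) = 1.
Proof.
  unfold Cmod, cis; simpl. pose proof (sin2_cos2 a) as h. unfold Rsqr in h.
  replace (cos a * (cos a * 1) + sin a * (sin a * 1)) with 1 by lra. apply sqrt_1.
Qed.

Lemma Cmod_cis_mul a z : Cmod (Cmult (cis a) z) = Cmod z.
Proof. rewrite Cmod_mult, Cmod_cis. ring. Qed.

Lemma cis_neq_0 a : cis a <> RtoC 0.
Proof. intros h. pose proof (Cmod_cis a) as e. rewrite h, Cmod_0 in e. lra. Qed.

Lemma cis_add a b : cis (a + b) = Cmult (cis a) (cis b).
Proof.
  unfold cis, Cmult; simpl. rewrite cos_plus, sin_plus. f_equal; ring.
Qed.

Lemma cis_add_2PI_Z a m : cis (a + 2 * IZR m * PI) = cis a.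
Proof.
  destruct (Z.le_ge_cases 0 m) as [h|h].
  - rewrite <- (Z2Nat.id m h), <- INR_IZR_INZ. unfold cis. rewrite cos_period, sin_period.
    reflexivity.
  - set (k := Z.to_nat (- m)).
    assert (e : a = a + 2 * IZR m * PI + 2 * INR k * PI)
      by (unfold k; rewrite INR_IZR_INZ, Z2Nat.id, opp_IZR by lia; ring).
    unfold cis. rewrite <- (cos_period _ k), <- (sin_period _ k), <- e. reflexivity.
Qed.

Lemma Cmod_pair_sqr a b : Cmod (a, b) ^ 2 = a^2 + b^2.
Proof. unfold Cmod; cbn [fst snd]. rewrite pow2_sqrt; [ring|nra]. Qed.

Lemma Cmod_pair_le a b : Cmod (a, b) <= Rabs a + Rabs b.
Proof.
  pose proof (Cmod_pair_sqr a b) as h. rewrite <- (pow2_abs a), <- (pow2_abs b) in h.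
  pose proof (Cmod_ge_0 (a, b)). pose proof (Rabs_pos a). pose proof (Rabs_pos b). nra.
Qed.

Lemma cis_mul_inj a z w : Cmult (cis a) z = Cmult (cis a) w -> z = w.
Proof.
  intros h. pose proof (cis_neq_0 a).
  transitivity (Cmult (Cinv (cis a)) (Cmult (cis a) z)); [field; assumption|].
  rewrite h. field. assumption.
Qed.

Lemma Cmod_phi th j : Cmod (phi th j) = sqrt (INR j).
Proof.
  unfold phi. fold (cis (2 * PI * th * INR j)).
  rewrite Cmod_mult, Cmod_cis, Cmod_R, Rabs_right by (apply Rle_ge, sqrt_pos). ring.
Qed.

(* [phi th j] has modulus [sqrt j], so the index [j] can be read off the point. *)
Definition phi_index (z : C) : nat := Z.to_nat (nearest_int (Cmod z ^ 2)).

Lemma phi_index_phi th j : phi_index (phi th j) = j.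
Proof.
  unfold phi_index. rewrite Cmod_phi, pow2_sqrt by apply pos_INR.
  rewrite (nearest_int_eq _ (Z.of_nat j)), Nat2Z.id; [reflexivity|].
  rewrite <- INR_IZR_INZ, Rminus_diag, Rabs_R0. lra.
Qed.

Lemma phi_image_index th z : phi_image th z -> z = phi th (phi_index z).
Proof. intros [j ->]. rewrite phi_index_phi. reflexivity. Qed.

Section Lattice_frame.

Variables (th : R) (n : nat).
Hypothesis n_pos : (0 < n)%nat.

Local Notation s := (sqrt (INR n)).
Local Notation u := (cis (2 * PI * th * INR n)).

Lemma sqrt_n_pos : 0 < s.
Proof. apply sqrt_lt_R0, lt_0_INR. exact n_pos. Qed.

Definition lattice_w1 : C := Cmult u (/ (2 * s), 2 * PI * th * s).
Definition lattice_w2 : C := Cmult u (0, 2 * PI * s).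
Definition lattice_point (p q : Z) : C :=
  Cplus (phi th n) (Cplus (Cmult (IZR p) lattice_w1) (Cmult (IZR q) lattice_w2)).

Definition offset (j : nat) : Z := (Z.of_nat j - Z.of_nat n)%Z.

Definition lattice_partner (j : nat) : C :=
  lattice_point (offset j) (- nearest_int (th * IZR (offset j))).

Lemma INR_offset j : INR j = INR n + IZR (offset j).
Proof. unfold offset. rewrite minus_IZR, <- !INR_IZR_INZ. ring. Qed.

Lemma phi_center : phi th n = Cmult u (s, 0).
Proof. unfold phi, cis, Cmult, RtoC; simpl. f_equal; ring. Qed.

Lemma lattice_point_sub_center p q :
  Cminus (lattice_point p q) (phi th n)
  = Cmult u (IZR p / (2 * s), 2 * PI * s * (th * IZR p + IZR q)).
Proof.
  unfold Cminus, lattice_point, lattice_w1, lattice_w2, cis, phi,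
    Cmult, Cplus, Copp, RtoC; simpl.
  f_equal; unfold Rdiv; ring.
Qed.

Lemma phi_in_frame j m :
  let d := 2 * PI * (th * IZR (offset j) - IZR m) in
  phi th j = Cmult u (sqrt (INR j) * cos d, sqrt (INR j) * sin d).
Proof.
  intros d. unfold phi. fold (cis (2 * PI * th * INR j)).
  replace (2 * PI * th * INR j) with (2 * PI * th * INR n + d + 2 * IZR m * PI)
    by (unfold d; rewrite (INR_offset j); ring).
  rewrite cis_add_2PI_Z, cis_add. unfold cis, Cmult, RtoC; simpl. f_equal; ring.
Qed.

Lemma phi_sub_center j m :
  let d := 2 * PI * (th * IZR (offset j) - IZR m) in
  Cminus (phi th j) (phi th n) = Cmult u (sqrt (INR j) * cos d - s, sqrt (INR j) * sin d).
Proof.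
  intros d. rewrite (phi_in_frame j m), phi_center. fold d.
  unfold Cminus, Copp, Cplus, Cmult; simpl. f_equal; ring.
Qed.

Lemma phi_sub_partner j :
  let d := 2 * PI * (th * IZR (offset j) - IZR (nearest_int (th * IZR (offset j)))) in
  let t := sqrt (INR j) in
  Cminus (phi th j) (lattice_partner j)
  = Cmult u (t * cos d - s - (t * t - s * s) / (2 * s), t * sin d - s * d).
Proof.
  intros d t. pose proof sqrt_n_pos as hs.
  set (m := nearest_int (th * IZR (offset j))) in d |- *.
  assert (hk : IZR (offset j) = t * t - s * s).
  { unfold t. rewrite !sqrt_sqrt by apply pos_INR. rewrite (INR_offset j). ring. }
  rewrite (phi_in_frame j m). fold d t.
  unfold Cminus, lattice_partner, lattice_point, lattice_w1, lattice_w2, cis, phi,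
    Cmult, Cplus, Copp, RtoC; simpl.
  fold m. rewrite opp_IZR. unfold d. rewrite hk. f_equal; field; lra.
Qed.

Lemma phi_near_partner S j :
  0 < S -> 2 * S <= s -> Cmod (Cminus (phi th j) (phi th n)) <= S ->
  Cmod (Cminus (phi th j) (lattice_partner j)) <= 3 * (2 * S)^2 / s.
Proof.
  intros hS hsS h. pose proof sqrt_n_pos as hs. pose proof PI_RGT_0.
  set (m := nearest_int (th * IZR (offset j))).
  set (d := 2 * PI * (th * IZR (offset j) - IZR m)).
  set (t := sqrt (INR j)).
  assert (ht : 0 <= t) by apply sqrt_pos.
  assert (hdPI : Rabs d <= PI).
  { pose proof (nearest_int_bound (th * IZR (offset j))) as hm. fold m in hm.
    unfold d. rewrite Rabs_mult, (Rabs_right (2 * PI)) by lra. nra. }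
  rewrite (phi_sub_center j m), Cmod_cis_mul in h. fold d t in h.
  pose proof (pow_incr _ _ 2 (conj (Cmod_ge_0 _) h)) as h2. rewrite Cmod_pair_sqr in h2.
  destruct (polar_close_bounds t s d S hS hsS ht hdPI h2) as [hts hds].
  rewrite phi_sub_partner, Cmod_cis_mul. fold m d t.
  eapply Rle_trans; [apply Cmod_pair_le|].
  apply polar_linearization_error; try lra.
  apply Rmult_le_reg_r with s; lra.
Qed.

Lemma lattice_point_near_center p q S :
  Cmod (Cminus (lattice_point p q) (phi th n)) <= S ->
  Rabs (IZR p) <= 2 * S * s /\ Rabs (th * IZR p + IZR q) * (2 * PI * s) <= S.
Proof.
  intros h. pose proof sqrt_n_pos as hs. pose proof PI_RGT_0.
  rewrite lattice_point_sub_center, Cmod_cis_mul in h.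
  pose proof (Rle_trans _ _ _ (Rmax_Cmod _) h) as hmax. cbn [fst snd] in hmax.
  pose proof (Rle_trans _ _ _ (Rmax_l _ _) hmax) as hp.
  pose proof (Rle_trans _ _ _ (Rmax_r _ _) hmax) as hr.
  split.
  - replace (IZR p) with (IZR p / (2 * s) * (2 * s)) by (field; lra).
    rewrite Rabs_mult, (Rabs_right (2 * s)) by lra. nra.
  - rewrite Rabs_mult, (Rabs_right (2 * PI * s)) in hr by nra. lra.
Qed.

Lemma partner_near_lattice_point S p q :
  0 < S -> 2 * S <= s -> Cmod (Cminus (lattice_point p q) (phi th n)) <= S ->
  exists j, lattice_partner j = lattice_point p q /\
            Cmod (Cminus (phi th j) (lattice_point p q)) <= 3 * (2 * S)^2 / s.
Proof.
  intros hS hsS h. pose proof sqrt_n_pos as hs. pose proof PI_RGT_0. pose proof PI2_1.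
  destruct (lattice_point_near_center p q S h) as [hp hr].
  set (r := th * IZR p + IZR q) in hr.
  assert (hr_half : Rabs r < /2).
  { apply Rnot_le_lt. intros hr2.
    assert (/2 * (2 * PI * s) <= Rabs r * (2 * PI * s)) by (apply Rmult_le_compat_r; nra).
    nra. }
  assert (hpn : (- Z.of_nat n <= p)%Z).
  { apply le_IZR. rewrite opp_IZR, <- INR_IZR_INZ, <- (sqrt_sqrt (INR n)) by apply pos_INR.
    apply Rabs_le_between in hp. nra. }
  set (j := Z.to_nat (Z.of_nat n + p)).
  assert (hoff : offset j = p) by (unfold offset, j; lia).
  assert (hm : nearest_int (th * IZR (offset j)) = (- q)%Z).
  { rewrite hoff. apply nearest_int_eq. rewrite opp_IZR.
    replace (th * IZR p - - IZR q) with r by (unfold r; ring). exact hr_half. }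
  assert (hpartner : lattice_partner j = lattice_point p q)
    by (unfold lattice_partner; rewrite hm, hoff, Z.opp_involutive; reflexivity).
  exists j. split; [exact hpartner|].
  rewrite <- hpartner, phi_sub_partner, Cmod_cis_mul, hm, hoff, opp_IZR.
  replace (th * IZR p - - IZR q) with r by (unfold r; ring).
  eapply Rle_trans; [apply Cmod_pair_le|].
  apply polar_linearization_error; try lra.
  - apply sqrt_pos.
  - apply Rabs_sub_le_of_sqr_sub_le; [lra|apply sqrt_pos|].
    rewrite !sqrt_sqrt by apply pos_INR. rewrite (INR_offset j), hoff.
    replace (INR n + IZR p - INR n) with (IZR p) by ring. exact hp.
  - rewrite Rabs_mult, (Rabs_right (2 * PI)) by lra. nra.
  - rewrite Rabs_mult, (Rabs_right (2 * PI)) by lra. nra.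
Qed.

Lemma lattice_point_inj p q p' q' : lattice_point p q = lattice_point p' q' -> p = p'.
Proof.
  intros h. pose proof sqrt_n_pos as hs.
  apply (f_equal (fun z => Cminus z (phi th n))) in h. cbv beta in h.
  rewrite !lattice_point_sub_center in h. apply cis_mul_inj in h. injection h as hp _.
  apply eq_IZR. apply (Rmult_eq_reg_r (/ (2 * s))); [exact hp|].
  apply Rinv_neq_0_compat. lra.
Qed.

Lemma lattice_partner_inj j j' : lattice_partner j = lattice_partner j' -> j = j'.
Proof. intros h. apply lattice_point_inj in h. unfold offset in h. lia. Qed.

Lemma lattice_w1_w2_indep : R_indep lattice_w1 lattice_w2.
Proof.
  intros r t h. pose proof sqrt_n_pos as hs. pose proof PI_RGT_0.
  assert (e : Cplus (Cmult (RtoC r) lattice_w1) (Cmult (RtoC t) lattice_w2)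
              = Cmult u (r / (2 * s), 2 * PI * s * (th * r + t))).
  { unfold lattice_w1, lattice_w2, cis, RtoC, Cmult, Cplus; simpl. f_equal; unfold Rdiv; ring. }
  assert (e0 : RtoC 0 = Cmult u (0, 0)) by (unfold cis, RtoC, Cmult; simpl; f_equal; ring).
  rewrite e, e0 in h. apply cis_mul_inj in h. injection h as h1 h2.
  assert (r = 0).
  { apply (Rmult_eq_reg_r (/ (2 * s))); [lra|]. apply Rinv_neq_0_compat. lra. }
  subst r. split; [reflexivity|]. replace (th * 0 + t) with t in h2 by ring.
  apply (Rmult_eq_reg_l (2 * PI * s)); [rewrite Rmult_0_r; exact h2|nra].
Qed.

Lemma lattice_w1_mul_tau : 0 <= th < 1 -> Cmult lattice_w1 (tau th n) = lattice_w2.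
Proof.
  intros hth. pose proof sqrt_n_pos as hs.
  unfold tau. rewrite frac_part_id by exact hth.
  set (D := Cplus (RtoC 1) (0, 4 * PI * th * INR n)).
  assert (hD : D <> RtoC 0) by (unfold D, RtoC, Cplus; simpl; intros e; injection e; lra).
  assert (e : Cmult (/ (2 * s), 2 * PI * th * s) (0, 4 * PI * INR n) = Cmult (0, 2 * PI * s) D).
  { assert (en : s * s = INR n) by (apply sqrt_sqrt, pos_INR).
    unfold D, RtoC, Cmult, Cplus; simpl. set (s0 := sqrt (INR n)) in *.
    rewrite <- en. f_equal; field; lra. }
  unfold lattice_w1, lattice_w2.
  transitivity (Cmult u (Cdiv (Cmult (/ (2 * s), 2 * PI * th * s) (0, 4 * PI * INR n)) D)).
  - field. exact hD.
  - rewrite e. field. exact hD.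
Qed.

Lemma lattice_frame_affine : affine_lattice (lattice_set (phi th n) lattice_w1 lattice_w2).
Proof.
  exists (phi th n), lattice_w1, lattice_w2. split; [exact lattice_w1_w2_indep|tauto].
Qed.

Lemma lattice_frame_equiv_tau :
  0 <= th < 1 ->
  lattice_equiv (lattice_set (phi th n) lattice_w1 lattice_w2)
                (lattice_set (RtoC 0) (RtoC 1) (tau th n)).
Proof.
  intros hth. right. exists lattice_w1, (phi th n). split.
  { intros h. destruct (lattice_w1_w2_indep 1 0) as [h1 _]; [|lra].
    rewrite h. ring. }
  intros z. rewrite <- (lattice_w1_mul_tau hth). split.
  - intros [a [b ->]]. eexists. split; [exists a, b; reflexivity|]. ring.
  - intros [w [[a [b ->]] ->]]. exists a, b. ring.
Qed.

Lemma phi_image_close_to_lattice_frame eps Rad S :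
  0 < Rad -> 2 * S <= s -> Rad + 3 * (2 * S)^2 / s <= S -> 3 * (2 * S)^2 / s < eps ->
  eps_close_in_ball eps Rad (phi th n) (phi_image th)
                    (lattice_set (phi th n) lattice_w1 lattice_w2).
Proof.
  intros hRad hsS hRS hE. pose proof sqrt_n_pos as hs.
  assert (hE0 : 0 <= 3 * (2 * S)^2 / s)
    by (apply Rmult_le_pos; [nra|apply Rlt_le, Rinv_0_lt_compat; lra]).
  assert (hRadS : Rad <= S) by lra.
  assert (hErr : 3 * (2 * Rad)^2 / s <= 3 * (2 * S)^2 / s).
  { apply Rmult_le_compat_r; [apply Rlt_le, Rinv_0_lt_compat; lra|].
    apply Rmult_le_compat_l; [lra|]. apply pow_incr. lra. }
  (* The larger radius S makes A' contain the partner of every lattice point within Rad. *)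
  set (A' := fun a => phi_image th a /\ Cmod (Cminus a (phi th n)) <= S).
  set (psi := fun z => lattice_partner (phi_index z)).
  exists A', (fun b => exists a, A' a /\ psi a = b).
  split; [now intros a []|]. split.
  { intros b [a [_ <-]]. eexists _, _. reflexivity. }
  split; [intros a ha hd; split; [exact ha|lra]|]. split.
  { intros b [p [q ->]] hb. fold (lattice_point p q) in *.
    destruct (partner_near_lattice_point Rad p q hRad ltac:(lra) hb) as [j [hj hdist]].
    exists (phi th j). split.
    - split; [exists j; reflexivity|].
      replace (Cminus (phi th j) (phi th n))
        with (Cplus (Cminus (phi th j) (lattice_point p q)) (Cminus (lattice_point p q) (phi th n)))
        by ring.
      eapply Rle_trans; [apply Cmod_triangle|]. lra.
    - unfold psi. rewrite phi_index_phi. exact hj. }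
  exists psi. split; [intros a ha; exists a; split; [exact ha|reflexivity]|]. split.
  { intros a1 a2 [h1 _] [h2 _] e.
    rewrite (phi_image_index th a1 h1), (phi_image_index th a2 h2).
    f_equal. apply lattice_partner_inj. exact e. }
  split; [intros b hb; exact hb|].
  intros a [ha hd]. rewrite (phi_image_index th a ha) in hd |- *.
  unfold psi. rewrite phi_index_phi.
  pose proof (phi_near_partner S _ ltac:(lra) hsS hd). lra.
Qed.

End Lattice_frame.

Lemma sqrt_INR_eventually_gt B : exists N, forall n, (N <= n)%nat -> B < sqrt (INR n).
Proof.
  destruct (INR_unbounded (Rmax B 0 ^ 2)) as [N hN]. exists N. intros n hn.
  apply le_INR in hn. pose proof (Rmax_r B 0).
  apply Rle_lt_trans with (Rmax B 0); [apply Rmax_l|].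
  rewrite <- (sqrt_pow2 (Rmax B 0)) by lra. apply sqrt_lt_1_alt. split; [nra|lra].
Qed.

Theorem theorem1 :
  forall eps Rad : R, 0 < eps -> 0 < Rad ->
  exists N : nat, forall (theta : R), 0 <= theta < 1 ->
    forall n : nat, (N <= n)%nat ->
      exists L : C -> Prop,
        affine_lattice L /\
        lattice_equiv L (lattice_set (RtoC 0) (RtoC 1) (tau theta n)) /\
        eps_close_in_ball eps Rad (phi theta n) (phi_image theta) L.
Proof.
  intros eps Rad heps hRad.
  set (S := Rad + 1). set (K := 3 * (2 * S)^2).
  assert (hS : 0 < S) by (unfold S; lra).
  assert (hK : 0 <= K) by (unfold K; nra).
  destruct (sqrt_INR_eventually_gt (2 * S + K + K / eps)) as [N hN].
  exists N. intros th hth n hn. specialize (hN n hn).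
  assert (hKeps : 0 <= K / eps)
    by (apply Rmult_le_pos; [lra|apply Rlt_le, Rinv_0_lt_compat; lra]).
  assert (hs : 0 < sqrt (INR n)) by (unfold S in hN; lra).
  assert (hn0 : (0 < n)%nat).
  { destruct n; [simpl in hs; rewrite sqrt_0 in hs; lra|lia]. }
  assert (hKs : K / sqrt (INR n) <= 1) by (apply Rle_div_l; lra).
  assert (hKeps' : K < sqrt (INR n) * eps) by (apply Rlt_div_l; lra).
  exists (lattice_set (phi th n) (lattice_w1 th n) (lattice_w2 th n)).
  split; [|split].
  - exact (lattice_frame_affine th n hn0).
  - exact (lattice_frame_equiv_tau th n hn0 hth).
  - apply (phi_image_close_to_lattice_frame th n hn0 eps Rad S); fold K.
    + exact hRad.
    + lra.
    + unfold S in *. lra.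
    + apply Rlt_div_l; lra.
Qed.
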